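(* Let $d\ge1$ and $k\ge2$ be integers and $\alpha\in[0,1]$. Then \[ \rho(A_\alpha(B(d,k)))\le\alpha(d+1)+2(1-\alpha)\sqrt d\cos\left(\frac{\pi}{k+1}\right) \] and \[ \rho(A_\alpha(B(d,k)))>\alpha(d+1)+2(1-\alpha)\sqrt d\cos\left(\frac{\pi}{k}\right)-\frac{20\alpha\sqrt d}{k^3}. \]
   Context: For a graph $G$, $A(G)$ is the adjacency matrix, $D(G)$ the diagonal degree matrix, and $A_\alpha(G)=\alpha D(G)+(1-\alpha)A(G)$; $\rho(M)$ is the largest eigenvalue of a real symmetric nonnegative matrix $M$. In a rooted tree the level of a vertex is its distance to the root plus one. The Bethe tree $B(d,k)$ is the rooted tree with $k$ levels in which the root has degree $d$, every vertex at level $j$ with $2\le j\le k-1$ has degree $d+1$, and every vertex at level $k$ has degree $1$. *)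

From Stdlib Require Import Reals List Arith.
Import ListNotations.
Open Scope R_scope.

Definition sumL {T : Type} (l : list T) (f : T -> R) : R :=
  fold_right (fun a s => f a + s) 0 l.

(* A graph with vertex type T (decidable equality) is given by a
   duplicate-free vertex list V and a 0/1-valued symmetric adjacency
   function A : T -> T -> R; matrices indexed by V are functions T -> T -> R. *)

Section Gen.
Context {T : Type} (eqT : forall x y : T, {x = y} + {x <> y}).

Definition degree (V : list T) (A : T -> T -> R) (u : T) : R :=
  sumL V (fun v => A u v).

Definition degMatrix (V : list T) (A : T -> T -> R) : T -> T -> R :=
  fun u v => if eqT u v then degree V A u else 0.

Definition A_alpha (V : list T) (A : T -> T -> R) (alpha : R) : T -> T -> R :=
  fun u v => alpha * degMatrix V A u v + (1 - alpha) * A u v.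

Definition is_eigenvalue (V : list T) (M : T -> T -> R) (lambda : R) : Prop :=
  exists x : T -> R,
    (exists u, In u V /\ x u <> 0) /\
    forall u, In u V -> sumL V (fun v => M u v * x v) = lambda * x u.

Definition is_largest_eigenvalue (V : list T) (M : T -> T -> R) (r : R) : Prop :=
  is_eigenvalue V M r /\ forall l, is_eigenvalue V M l -> l <= r.
End Gen.

(* Vertices are words over the alphabet {0,...,d-1}; the root is the empty
   word (level 1), and the children of w are w ++ [i], i < d.  A word of
   length j-1 lies at level j; B(d,k) consists of all words of length <= k-1.
   Hence the root has degree d, vertices at levels 2..k-1 have degree d+1,
   and vertices at level k have degree 1. *)

Fixpoint words (d n : nat) : list (list nat) :=
  match n with
  | O => [ [] ]
  | S n' => flat_map (fun w => map (fun i => w ++ [i]) (seq 0 d)) (words d n')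
  end.

Definition bethe_vertices (d k : nat) : list (list nat) :=
  flat_map (words d) (seq 0 k).

Definition is_child (u v : list nat) : bool :=
  andb (Nat.eqb (length v) (S (length u)))
  (if list_eq_dec Nat.eq_dec (firstn (length u) v) u then true else false).

Definition bethe_adj (u v : list nat) : R :=
  if orb (is_child u v) (is_child v u) then 1 else 0.

Definition bethe_A_alpha (d k : nat) (alpha : R) : list nat -> list nat -> R :=
  A_alpha (list_eq_dec Nat.eq_dec) (bethe_vertices d k) bethe_adj alpha.

(** Eigenvectors of A_α(B(d,k)) that are constant on levels correspond to solutions
    f_0, ..., f_(k-1) of a three-term recursion with f_k = 0.  Taking λ as the largest
    root of f_k, the level vector is positive, so λ = ρ by the Collatz–Wielandt bound;
    the same bound applied to the positive test vector sin((j+1)π/(k+1)) / √d^j gives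
    the upper estimate.  For the lower estimate, the recursion at level j is weighted
    by sin²((j+1)π/k) / f_j and summed: AM–GM on the off-diagonal terms leaves exactly
    the Chebyshev sums Σ sin² and Σ sin·sin, and the only loss is the missing degree at
    the root, of size α sin²(π/k) ≤ απ²/k². *)
From Stdlib Require Import Reals List Arith Lra Lia Classical.
Import ListNotations.
Open Scope R_scope.

Section ListSums.
Context {T : Type}.
Implicit Types (l : list T) (f g : T -> R).

Lemma sumL_nil f : sumL [] f = 0.
Proof. reflexivity. Qed.

Lemma sumL_cons a l f : sumL (a :: l) f = f a + sumL l f.
Proof. reflexivity. Qed.

Lemma sumL_app l1 l2 f : sumL (l1 ++ l2) f = sumL l1 f + sumL l2 f.
Proof.
  induction l1 as [|a l1 IH]; simpl app; rewrite ?sumL_nil, ?sumL_cons, ?IH; ring.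
Qed.

Lemma sumL_ext l f g : (forall x, In x l -> f x = g x) -> sumL l f = sumL l g.
Proof.
  induction l as [|a l IH]; intros H; rewrite ?sumL_nil, ?sumL_cons; [reflexivity|].
  rewrite H, IH; auto with datatypes.
Qed.

Lemma sumL_plus l f g : sumL l (fun x => f x + g x) = sumL l f + sumL l g.
Proof. induction l as [|a l IH]; rewrite ?sumL_nil, ?sumL_cons, ?IH; ring. Qed.

Lemma sumL_scal l f c : sumL l (fun x => c * f x) = c * sumL l f.
Proof. induction l as [|a l IH]; rewrite ?sumL_nil, ?sumL_cons, ?IH; ring. Qed.

Lemma sumL_mult_r l f c : sumL l (fun x => f x * c) = sumL l f * c.
Proof. induction l as [|a l IH]; rewrite ?sumL_nil, ?sumL_cons, ?IH; ring. Qed.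

Lemma sumL_const l c : sumL l (fun _ => c) = INR (length l) * c.
Proof.
  induction l as [|a l IH]; rewrite ?sumL_nil, ?sumL_cons, ?IH; simpl length;
    rewrite ?S_INR; simpl INR; ring.
Qed.

Lemma sumL_zero l f : (forall x, In x l -> f x = 0) -> sumL l f = 0.
Proof.
  intros H. rewrite (sumL_ext l f (fun _ => 0)), sumL_const by exact H. ring.
Qed.

Lemma sumL_le l f g : (forall x, In x l -> f x <= g x) -> sumL l f <= sumL l g.
Proof.
  induction l as [|a l IH]; intros H; rewrite ?sumL_nil, ?sumL_cons; [lra|].
  apply Rplus_le_compat; auto with datatypes.
Qed.

Lemma sumL_lt l f g a : In a l -> f a < g a ->
  (forall x, In x l -> f x <= g x) -> sumL l f < sumL l g.
Proof.
  induction l as [|b l IH]; intros Ha Hlt H; [contradiction|].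
  rewrite !sumL_cons. destruct Ha as [<-|Ha].
  - apply Rplus_lt_le_compat; [exact Hlt|]. apply sumL_le; auto with datatypes.
  - apply Rplus_le_lt_compat; auto with datatypes.
Qed.

Lemma sumL_nonneg l f : (forall x, In x l -> 0 <= f x) -> 0 <= sumL l f.
Proof. intros H. rewrite <- (sumL_zero l (fun _ => 0)) by auto. apply sumL_le, H. Qed.

Lemma sumL_abs l f : Rabs (sumL l f) <= sumL l (fun x => Rabs (f x)).
Proof.
  induction l as [|a l IH]; rewrite ?sumL_nil, ?sumL_cons; [rewrite Rabs_R0; lra|].
  eapply Rle_trans; [apply Rabs_triang | lra].
Qed.

Lemma sumL_map {U : Type} (h : U -> T) (l : list U) f :
  sumL (map h l) f = sumL l (fun x => f (h x)).
Proof.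
  induction l as [|a l IH]; [reflexivity|]. simpl map. rewrite sumL_cons, IH. reflexivity.
Qed.

Lemma exists_argmax l f : l <> [] -> exists m, In m l /\ forall v, In v l -> f v <= f m.
Proof.
  induction l as [|a l IH]; intros Hl; [congruence|]. destruct l as [|b l'].
  - exists a. split; [left; reflexivity|]. intros v [<-|[]]; lra.
  - destruct (IH ltac:(discriminate)) as [m [Hm Hmax]].
    destruct (Rle_dec (f a) (f m)).
    + exists m. split; [right; exact Hm|]. intros v [<-|Hv]; auto.
    + exists a. split; [left; reflexivity|]. intros v [<-|Hv]; [lra|].
      specialize (Hmax v Hv); lra.
Qed.

Variable eqT : forall x y : T, {x = y} + {x <> y}.

Lemma sumL_indicator l a c : NoDup l -> In a l ->
  sumL l (fun x => if eqT x a then c else 0) = c.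
Proof.
  induction l as [|b l IH]; intros Hn Ha; [contradiction|].
  inversion Hn as [|? ? Hb Hn']; subst. rewrite sumL_cons.
  destruct (eqT b a) as [->|Hne].
  - rewrite sumL_zero; [ring|]. intros x Hx. destruct (eqT x a) as [->|]; easy.
  - destruct Ha as [->|Ha]; [congruence|]. rewrite IH; auto. ring.
Qed.

Lemma sumL_indicator_mul l a G : NoDup l -> In a l ->
  sumL l (fun v => (if eqT v a then 1 else 0) * G v) = G a.
Proof.
  intros Hn Ha. rewrite <- (sumL_indicator l a (G a)) by assumption.
  apply sumL_ext. intros v _. destruct (eqT v a) as [->|]; ring.
Qed.

Lemma sumL_indicator_mul_notin l a G : ~ In a l ->
  sumL l (fun v => (if eqT v a then 1 else 0) * G v) = 0.
Proof.
  intros Ha. apply sumL_zero. intros v Hv. destruct (eqT v a) as [->|]; [contradiction|ring].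
Qed.

End ListSums.

Lemma sumL_swap {T U : Type} (l : list T) (m : list U) (F : T -> U -> R) :
  sumL l (fun a => sumL m (fun b => F a b)) = sumL m (fun b => sumL l (fun a => F a b)).
Proof.
  induction l as [|a l IH].
  - rewrite sumL_nil, sumL_zero; reflexivity.
  - rewrite sumL_cons, IH, <- sumL_plus. reflexivity.
Qed.

Lemma sumL_seq_last n (F : nat -> R) :
  sumL (seq 0 (S n)) F = sumL (seq 0 n) F + F n.
Proof. rewrite seq_S, sumL_app, sumL_cons, sumL_nil, Nat.add_0_l. ring. Qed.

Lemma sumL_seq_first n (F : nat -> R) :
  sumL (seq 0 (S n)) F = F 0%nat + sumL (seq 0 n) (fun j => F (S j)).
Proof. simpl seq. rewrite sumL_cons, <- seq_shift, sumL_map. reflexivity. Qed.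

Section CollatzWielandt.
Context {T : Type} (V : list T) (M : T -> T -> R).
Hypothesis M_nonneg : forall u v, In u V -> In v V -> 0 <= M u v.

(* Compare an eigenvector y with z at a vertex m maximising |y| / z. *)
Lemma eigenvalue_le_of_subinvariant (z : T -> R) (C l : R) :
  (forall u, In u V -> 0 < z u) ->
  (forall u, In u V -> sumL V (fun v => M u v * z v) <= C * z u) ->
  is_eigenvalue V M l -> l <= C.
Proof.
  intros Hz HC [y [[u0 [Hu0 Hy0]] Heig]].
  destruct (exists_argmax V (fun v => Rabs (y v) / z v)) as [m [Hm Hmax]];
    [intros ->; contradiction|].
  set (t := Rabs (y m) / z m) in *.
  assert (Hzm := Hz m Hm).
  assert (Ht : 0 < t).
  { apply Rlt_le_trans with (Rabs (y u0) / z u0); [|apply Hmax; exact Hu0].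
    apply Rdiv_lt_0_compat; [apply Rabs_pos_lt; exact Hy0 | apply Hz; exact Hu0]. }
  assert (Hdom : forall v, In v V -> Rabs (y v) <= t * z v).
  { intros v Hv. specialize (Hmax v Hv). specialize (Hz v Hv).
    apply (Rmult_le_compat_r (z v)) in Hmax; [|lra].
    replace (Rabs (y v) / z v * z v) with (Rabs (y v)) in Hmax by (field; lra). lra. }
  assert (Hym : Rabs (y m) = t * z m) by (unfold t; field; lra).
  assert (Hl : Rabs l * Rabs (y m) <= t * (C * z m)).
  { rewrite <- Rabs_mult, <- Heig by exact Hm.
    eapply Rle_trans; [apply sumL_abs|].
    apply Rle_trans with (sumL V (fun v => t * (M m v * z v))).
    - apply sumL_le. intros v Hv.
      rewrite Rabs_mult, Rabs_pos_eq by (apply M_nonneg; assumption).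
      specialize (Hdom v Hv). specialize (M_nonneg m v Hm Hv). nra.
    - rewrite sumL_scal. apply Rmult_le_compat_l; [lra|]. apply HC, Hm. }
  rewrite Hym in Hl. pose proof (Rle_abs l).
  assert (0 < t * z m) by (apply Rmult_lt_0_compat; assumption). nra.
Qed.

Lemma largest_eigenvalue_of_pos_eigenvector (z : T -> R) (lam : R) :
  V <> [] -> (forall u, In u V -> 0 < z u) ->
  (forall u, In u V -> sumL V (fun v => M u v * z v) = lam * z u) ->
  is_largest_eigenvalue V M lam.
Proof.
  intros HV Hz Heig. split.
  - exists z. split; [|exact Heig].
    destruct V as [|u V']; [congruence|]. exists u. split; [left; reflexivity|].
    apply Rgt_not_eq, Hz. left; reflexivity.
  - intros l Hl. apply (eigenvalue_le_of_subinvariant z lam l Hz); [|exact Hl].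
    intros u Hu. rewrite Heig by exact Hu. lra.
Qed.

End CollatzWielandt.

Definition letters (d : nat) (w : list nat) : Prop := Forall (fun i => (i < d)%nat) w.

Lemma in_words d n w : In w (words d n) <-> length w = n /\ letters d w.
Proof.
  revert w; induction n as [|n IH]; intros w; simpl.
  - split.
    + intros [<-|[]]. split; [reflexivity | constructor].
    + intros [H _]. destruct w; [left; reflexivity | discriminate].
  - rewrite in_flat_map. split.
    + intros [w' [Hw' Hin]]. apply in_map_iff in Hin as [i [<- Hi]].
      apply in_seq in Hi. apply IH in Hw' as [Hl Hlet].
      rewrite length_app; simpl. split; [lia|].
      apply Forall_app. split; [exact Hlet | constructor; [lia | constructor]].
    + intros [Hl Hlet]. destruct w as [|x w0 _] using rev_ind; [discriminate|].
      rewrite length_app in Hl; simpl in Hl.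
      apply Forall_app in Hlet as [H1 H2]. inversion H2; subst.
      exists w0. split; [apply IH; split; [lia | exact H1]|].
      apply in_map_iff. exists x. split; [reflexivity | apply in_seq; lia].
Qed.

Lemma NoDup_flat_map {A B : Type} (g : A -> list B) (l : list A) :
  NoDup l -> (forall a, NoDup (g a)) ->
  (forall a b x, In a l -> In b l -> In x (g a) -> In x (g b) -> a = b) ->
  NoDup (flat_map g l).
Proof.
  induction l as [|a l IH]; intros Hl Hg Hdis; simpl; [constructor|].
  inversion Hl; subst. apply NoDup_app; auto.
  - apply IH; auto. intros; eapply Hdis; eauto; right; assumption.
  - intros x Hx Hx'. apply in_flat_map in Hx' as [b [Hb Hxb]].
    assert (a = b) by (eapply Hdis; eauto; [left|right]; auto). subst. contradiction.
Qed.

Lemma NoDup_words d n : NoDup (words d n).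
Proof.
  induction n as [|n IH]; simpl; [repeat constructor; auto|].
  apply NoDup_flat_map; [exact IH | |].
  - intros w. apply NoDup_map_NoDup_ForallPairs; [|apply seq_NoDup].
    intros i j _ _ H. apply app_inj_tail in H. tauto.
  - intros a b x _ _ Ha Hb. apply in_map_iff in Ha as [i [<- _]], Hb as [j [E _]].
    apply app_inj_tail in E. symmetry; tauto.
Qed.

Lemma in_bethe_vertices d k w :
  In w (bethe_vertices d k) <-> (length w < k)%nat /\ letters d w.
Proof.
  unfold bethe_vertices. rewrite in_flat_map. split.
  - intros [n [Hn Hw]]. apply in_seq in Hn. apply in_words in Hw as [? ?].
    split; [lia | assumption].
  - intros [Hl Hlet]. exists (length w). split; [apply in_seq; lia | apply in_words; auto].
Qed.

Lemma NoDup_bethe_vertices d k : NoDup (bethe_vertices d k).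
Proof.
  apply NoDup_flat_map; [apply seq_NoDup | apply NoDup_words |].
  intros a b x _ _ Ha Hb. apply in_words in Ha, Hb. lia.
Qed.

Lemma root_in_bethe_vertices d k : (1 <= k)%nat -> In [] (bethe_vertices d k).
Proof. intros Hk. apply in_bethe_vertices. split; [simpl; lia | constructor]. Qed.

Lemma is_child_spec u v : is_child u v = true <-> exists i, v = u ++ [i].
Proof.
  unfold is_child. rewrite Bool.andb_true_iff, Nat.eqb_eq. split.
  - intros [Hl He]. destruct (list_eq_dec Nat.eq_dec (firstn (length u) v) u) as [E|];
      [|discriminate].
    rewrite <- (firstn_skipn (length u) v), E.
    assert (Hs : length (skipn (length u) v) = 1%nat) by (rewrite length_skipn; lia).
    destruct (skipn (length u) v) as [|i [|]]; try discriminate. exists i; reflexivity.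
  - intros [i ->]. rewrite length_app; simpl. split; [lia|].
    rewrite firstn_app, Nat.sub_diag, firstn_all, app_nil_r.
    destruct (list_eq_dec Nat.eq_dec u u); congruence.
Qed.

Notation word_eq_dec := (list_eq_dec Nat.eq_dec).

Definition child_indicator (d : nat) (u v : list nat) : R :=
  sumL (seq 0 d) (fun i => if word_eq_dec v (u ++ [i]) then 1 else 0).

Definition parent_indicator (u v : list nat) : R :=
  if word_eq_dec u [] then 0 else if word_eq_dec v (removelast u) then 1 else 0.

Lemma child_indicator_child d u i : (i < d)%nat -> child_indicator d u (u ++ [i]) = 1.
Proof.
  intros Hi. unfold child_indicator.
  transitivity (sumL (seq 0 d) (fun j => if Nat.eq_dec j i then 1 else 0)).
  - apply sumL_ext. intros j _.
    destruct (word_eq_dec (u ++ [i]) (u ++ [j])) as [E|E], (Nat.eq_dec j i) as [->|Hji];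
      try reflexivity.
    + apply app_inj_tail in E as [_ ->]. congruence.
    + congruence.
  - apply sumL_indicator; [apply seq_NoDup | apply in_seq; lia].
Qed.

Lemma child_indicator_not_child d u v :
  (forall i, v <> u ++ [i]) -> child_indicator d u v = 0.
Proof.
  intros H. apply sumL_zero. intros i _.
  destruct (word_eq_dec v (u ++ [i])); [exfalso; eapply H; eassumption | reflexivity].
Qed.

Lemma length_removelast (u : list nat) : length (removelast u) = pred (length u).
Proof.
  destruct u as [|x u _] using rev_ind; [reflexivity|].
  rewrite removelast_last, length_app; simpl. lia.
Qed.

Lemma bethe_adj_decomp d u v : letters d v ->
  bethe_adj u v = child_indicator d u v + parent_indicator u v.
Proof.
  intros Hv. unfold bethe_adj, parent_indicator.
  destruct (is_child u v) eqn:E1; simpl.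
  - apply is_child_spec in E1 as [i ->].
    apply Forall_app in Hv as [_ Hi]. inversion Hi; subst.
    rewrite child_indicator_child by assumption.
    destruct (word_eq_dec u []); [ring|].
    destruct (word_eq_dec (u ++ [i]) (removelast u)) as [E|]; [|ring].
    apply (f_equal (@length nat)) in E.
    rewrite length_removelast, length_app in E. simpl in E. lia.
  - assert (Hnc : forall i, v <> u ++ [i]).
    { intros i E. rewrite <- Bool.not_true_iff_false, is_child_spec in E1. eauto. }
    rewrite child_indicator_not_child by exact Hnc.
    destruct (is_child v u) eqn:E2.
    + apply is_child_spec in E2 as [i ->].
      destruct (word_eq_dec (v ++ [i]) []) as [E|]; [destruct v; discriminate|].
      rewrite removelast_last. destruct (word_eq_dec v v); [ring | congruence].
    + destruct (word_eq_dec u []) as [|Hu]; [ring|].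
      destruct (word_eq_dec v (removelast u)) as [->|]; [|ring].
      rewrite <- Bool.not_true_iff_false, is_child_spec in E2. exfalso. apply E2.
      exists (last u 0%nat). apply app_removelast_last, Hu.
Qed.

(* Levels are counted from 0 here: level j consists of the words of length j, which is
   level j + 1 in the paper. *)
Definition below (g : nat -> R) (j : nat) : R := match j with O => 0 | S i => g i end.

Section BetheLevels.
Variables d k : nat.

Definition above (g : nat -> R) (j : nat) : R :=
  if lt_dec (S j) k then INR d * g (S j) else 0.

Definition level_degree (j : nat) : R := below (fun _ => 1) j + above (fun _ => 1) j.

Definition level_image (alpha : R) (g : nat -> R) (j : nat) : R :=
  alpha * level_degree j * g j + (1 - alpha) * (below g j + above g j).

Lemma parent_level_sum u g : In u (bethe_vertices d k) ->
  sumL (bethe_vertices d k) (fun v => parent_indicator u v * g (length v)) = below g (length u).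
Proof.
  intros Hu. unfold parent_indicator. destruct u as [|x u _] using rev_ind.
  - destruct (word_eq_dec [] []); [|congruence]. apply sumL_zero. intros; ring.
  - destruct (word_eq_dec (u ++ [x]) []) as [E|_]; [destruct u; discriminate|].
    rewrite removelast_last, length_app, Nat.add_1_r.
    apply in_bethe_vertices in Hu as [Hl Hlet]. apply Forall_app in Hlet as [Hlet _].
    apply (sumL_indicator_mul word_eq_dec _ u (fun v => g (length v))).
    + apply NoDup_bethe_vertices.
    + apply in_bethe_vertices. rewrite length_app in Hl. split; [lia | exact Hlet].
Qed.

Lemma children_level_sum u g : In u (bethe_vertices d k) ->
  sumL (bethe_vertices d k) (fun v => child_indicator d u v * g (length v))
  = above g (length u).
Proof.
  intros Hu. unfold child_indicator.
  rewrite (sumL_ext _ _ (fun v => sumL (seq 0 d)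
            (fun i => (if word_eq_dec v (u ++ [i]) then 1 else 0) * g (length v))))
    by (intros; symmetry; apply sumL_mult_r).
  rewrite sumL_swap. unfold above. destruct (lt_dec (S (length u)) k).
  - rewrite (sumL_ext _ _ (fun _ => g (S (length u)))), sumL_const, length_seq; [ring|].
    intros i Hi. apply in_seq in Hi.
    apply in_bethe_vertices in Hu as [_ Hlet].
    rewrite (sumL_indicator_mul word_eq_dec _ _ (fun v => g (length v))).
    + rewrite length_app, Nat.add_1_r. reflexivity.
    + apply NoDup_bethe_vertices.
    + apply in_bethe_vertices. rewrite length_app, Nat.add_1_r. split; [exact l|].
      apply Forall_app. split; [exact Hlet | constructor; [lia | constructor]].
  - apply sumL_zero. intros i _. apply sumL_indicator_mul_notin. intros Hin.
    apply in_bethe_vertices in Hin. rewrite length_app in Hin; simpl in Hin. lia.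
Qed.

Lemma bethe_adj_level_sum u g : In u (bethe_vertices d k) ->
  sumL (bethe_vertices d k) (fun v => bethe_adj u v * g (length v))
  = below g (length u) + above g (length u).
Proof.
  intros Hu.
  rewrite (sumL_ext _ _ (fun v => child_indicator d u v * g (length v)
                                  + parent_indicator u v * g (length v))).
  - rewrite sumL_plus, children_level_sum, parent_level_sum by exact Hu. ring.
  - intros v Hv. apply in_bethe_vertices in Hv. rewrite (bethe_adj_decomp d) by tauto. ring.
Qed.

Lemma bethe_degree u : In u (bethe_vertices d k) ->
  degree (bethe_vertices d k) bethe_adj u = level_degree (length u).
Proof.
  intros Hu. unfold degree, level_degree. rewrite <- bethe_adj_level_sum by exact Hu.
  apply sumL_ext. intros; ring.
Qed.

Lemma level_degree_bounds j : 0 <= level_degree j <= INR d + 1.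
Proof.
  unfold level_degree, above, below. pose proof (pos_INR d).
  destruct j, (lt_dec _ k); lra.
Qed.

Lemma bethe_A_alpha_level_sum alpha u g : In u (bethe_vertices d k) ->
  sumL (bethe_vertices d k) (fun v => bethe_A_alpha d k alpha u v * g (length v))
  = level_image alpha g (length u).
Proof.
  intros Hu. unfold bethe_A_alpha, A_alpha, degMatrix.
  rewrite (sumL_ext _ _ (fun v =>
     alpha * ((if word_eq_dec v u then 1 else 0)
              * (degree (bethe_vertices d k) bethe_adj u * g (length v)))
     + (1 - alpha) * (bethe_adj u v * g (length v)))).
  - rewrite sumL_plus, !sumL_scal, bethe_adj_level_sum by exact Hu.
    rewrite (sumL_indicator_mul word_eq_dec _ u
               (fun v => degree (bethe_vertices d k) bethe_adj u * g (length v)))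
      by (apply NoDup_bethe_vertices || exact Hu).
    rewrite bethe_degree by exact Hu. unfold level_image. ring.
  - intros v _. destruct (word_eq_dec u v), (word_eq_dec v u); subst; try congruence; ring.
Qed.

Lemma bethe_A_alpha_nonneg alpha u v : 0 <= alpha <= 1 -> 0 <= bethe_A_alpha d k alpha u v.
Proof.
  intros Ha. assert (Hadj : forall u v, 0 <= bethe_adj u v).
  { intros u' v'. unfold bethe_adj. destruct (is_child u' v' || is_child v' u')%bool; lra. }
  assert (0 <= degree (bethe_vertices d k) bethe_adj u)
    by (apply sumL_nonneg; intros; apply Hadj).
  unfold bethe_A_alpha, A_alpha, degMatrix. specialize (Hadj u v).
  destruct (word_eq_dec u v); nra.
Qed.

End BetheLevels.

Lemma sin_frac_PI_pos m n : (0 < m < n)%nat -> 0 < sin (INR m * (PI / INR n)).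
Proof.
  intros Hmn. assert (Hn : 0 < INR n) by (apply lt_0_INR; lia).
  assert (Hm : 0 < INR m < INR n) by (split; [apply lt_0_INR | apply lt_INR]; lia).
  pose proof PI_RGT_0. apply sin_gt_0.
  - apply Rmult_lt_0_compat; [lra | apply Rdiv_lt_0_compat; lra].
  - apply Rmult_lt_reg_r with (INR n); [exact Hn|].
    replace (INR m * (PI / INR n) * INR n) with (INR m * PI) by (field; lra). nra.
Qed.

Lemma sin_PI_frac_mul n : (0 < n)%nat -> sin (INR n * (PI / INR n)) = 0.
Proof.
  intros Hn. replace (INR n * (PI / INR n)) with PI by (field; apply not_0_INR; lia).
  apply sin_PI.
Qed.

Definition sine_level_vector (q phi : R) (j : nat) : R := sin (INR (S j) * phi) / q ^ j.

Lemma sin_sub_add a t : sin (a - t) + sin (a + t) = 2 * cos t * sin a.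
Proof. rewrite sin_minus, sin_plus. ring. Qed.

Lemma sine_level_vector_neighbours d k q phi j :
  0 < q -> q * q = INR d -> sin (INR (S k) * phi) = 0 -> (j < k)%nat ->
  below (sine_level_vector q phi) j + above d k (sine_level_vector q phi) j
  = 2 * q * cos phi * sine_level_vector q phi j.
Proof.
  intros Hq Hqq Hphi Hj. unfold sine_level_vector, above.
  assert (Hqj : q ^ j <> 0) by (apply pow_nonzero; lra).
  assert (Hlow : below (fun i => sin (INR (S i) * phi) / q ^ i) j
                 = sin (INR (S j) * phi - phi) * q / q ^ j).
  { destruct j as [|j]; cbn [below].
    - simpl. rewrite Rmult_1_l, Rminus_diag, sin_0. field.
    - replace (INR (S (S j)) * phi - phi) with (INR (S j) * phi)
        by (rewrite (S_INR (S j)); ring).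
      simpl pow. field. split; try apply pow_nonzero; lra. }
  assert (Hup : (if lt_dec (S j) k then INR d * (sin (INR (S (S j)) * phi) / q ^ S j) else 0)
                = sin (INR (S j) * phi + phi) * q / q ^ j).
  { replace (INR (S j) * phi + phi) with (INR (S (S j)) * phi) by (rewrite (S_INR (S j)); ring).
    destruct (lt_dec (S j) k).
    - rewrite <- Hqq. simpl pow. field. split; try apply pow_nonzero; lra.
    - replace (S j) with k by lia. rewrite Hphi. unfold Rdiv. ring. }
  rewrite Hlow, Hup.
  replace (sin (INR (S j) * phi - phi) * q / q ^ j + sin (INR (S j) * phi + phi) * q / q ^ j)
    with ((sin (INR (S j) * phi - phi) + sin (INR (S j) * phi + phi)) * q / q ^ j)
    by (field; exact Hqj).
  rewrite sin_sub_add. field. exact Hqj.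
Qed.

Lemma bethe_eigenvalue_upper d k alpha l :
  (1 <= d)%nat -> 0 <= alpha <= 1 ->
  is_eigenvalue (bethe_vertices d k) (bethe_A_alpha d k alpha) l ->
  l <= alpha * (INR d + 1) + 2 * (1 - alpha) * sqrt (INR d) * cos (PI / INR (k + 1)).
Proof.
  intros Hd Ha Hl. assert (HD : 1 <= INR d) by (apply (le_INR 1); exact Hd).
  set (q := sqrt (INR d)). assert (Hq : 0 < q) by (apply sqrt_lt_R0; lra).
  assert (Hqq : q * q = INR d) by (apply sqrt_sqrt; lra).
  set (phi := PI / INR (k + 1)). set (s := sine_level_vector q phi).
  assert (Hs : forall j, (j < k)%nat -> 0 < s j).
  { intros j Hj. apply Rdiv_lt_0_compat; [|apply pow_lt, Hq].
    unfold phi. rewrite Nat.add_1_r. apply sin_frac_PI_pos. lia. }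
  apply (eigenvalue_le_of_subinvariant (bethe_vertices d k) (bethe_A_alpha d k alpha)
           (fun u v _ _ => bethe_A_alpha_nonneg d k alpha u v Ha)
           (fun v => s (length v))); [| |exact Hl].
  - intros u Hu. apply in_bethe_vertices in Hu as [Hu _]. apply Hs, Hu.
  - intros u Hu. rewrite bethe_A_alpha_level_sum by exact Hu.
    apply in_bethe_vertices in Hu as [Hu _]. unfold level_image.
    rewrite (sine_level_vector_neighbours d k q phi) by
      (try assumption; unfold phi; rewrite Nat.add_1_r; apply sin_PI_frac_mul; lia).
    pose proof (level_degree_bounds d k (length u)). specialize (Hs _ Hu). fold s.
    assert (alpha * level_degree d k (length u) * s (length u)
            <= alpha * (INR d + 1) * s (length u))
      by (apply Rmult_le_compat_r; [lra|]; apply Rmult_le_compat_l; lra).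
    lra.
Qed.

Lemma continuity_pos_nbhd (f : R -> R) z : continuity_pt f z -> 0 < f z ->
  exists del, 0 < del /\ forall y, Rabs (y - z) < del -> 0 < f y.
Proof.
  intros Hc Hp. destruct (Hc (f z) Hp) as [del [Hdel H]].
  exists del. split; [exact Hdel|]. intros y Hy.
  destruct (Req_dec y z) as [->|Hne]; [exact Hp|].
  assert (Hdist : R_dist (f y) (f z) < f z) by (apply H; repeat split; auto).
  unfold R_dist in Hdist. apply Rabs_def2 in Hdist. lra.
Qed.

Lemma continuity_pos_nbhd_family (F : nat -> R -> R) z m :
  (forall j, continuity (F j)) -> (forall j, (j < m)%nat -> 0 < F j z) ->
  exists del, 0 < del /\ forall y, Rabs (y - z) < del -> forall j, (j < m)%nat -> 0 < F j y.
Proof.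
  intros Hc. induction m as [|m IH]; intros Hp.
  - exists 1. split; [lra | intros; lia].
  - destruct IH as [d1 [Hd1 H1]]; [intros; apply Hp; lia|].
    destruct (continuity_pos_nbhd (F m) z (Hc m z)) as [d2 [Hd2 H2]]; [apply Hp; lia|].
    exists (Rmin d1 d2). split; [apply Rmin_glb_lt; assumption|].
    intros y Hy j Hj. pose proof (Rmin_l d1 d2). pose proof (Rmin_r d1 d2).
    destruct (Nat.eq_dec j m) as [->|]; [apply H2; lra | apply H1; [lra | lia]].
Qed.

(* z is the supremum of the set of points where some F j is nonpositive. *)
Lemma continuous_family_last_zero (F : nat -> R -> R) m a b :
  (forall j, continuity (F j)) ->
  (exists j, (j < m)%nat /\ F j a <= 0) ->
  (forall y, b <= y -> forall j, (j < m)%nat -> 0 < F j y) ->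
  exists z, (forall j, (j < m)%nat -> 0 <= F j z) /\ exists j, (j < m)%nat /\ F j z = 0.
Proof.
  intros Hc Ha Hb.
  set (E := fun y => exists j, (j < m)%nat /\ F j y <= 0).
  destruct (completeness E) as [z [Hub Hlub]]; [| exists a; exact Ha |].
  { exists b. intros y [j [Hj Hy]]. destruct (Rle_dec y b); [assumption|].
    specialize (Hb y ltac:(lra) j Hj). lra. }
  assert (Hright : forall y, z < y -> forall j, (j < m)%nat -> 0 < F j y).
  { intros y Hy j Hj. destruct (Rlt_dec 0 (F j y)) as [|Hn]; [assumption|].
    assert (y <= z) by (apply Hub; exists j; split; [exact Hj | lra]). lra. }
  assert (Hnonneg : forall j, (j < m)%nat -> 0 <= F j z).
  { intros j Hj. destruct (Rle_dec 0 (F j z)) as [|Hn]; [assumption|].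
    destruct (continuity_pos_nbhd (fun y => - F j y) z) as [del [Hdel H]];
      [apply continuity_pt_opp, Hc | lra |].
    assert (Hy : Rabs (z + del / 2 - z) < del) by (rewrite Rabs_right; lra).
    specialize (H _ Hy). specialize (Hright (z + del / 2) ltac:(lra) j Hj). lra. }
  exists z. split; [exact Hnonneg|].
  destruct (classic (exists j, (j < m)%nat /\ F j z <= 0)) as [[j [Hj Hz]]|Hpos].
  { exists j. split; [exact Hj|]. specialize (Hnonneg j Hj). lra. }
  exfalso.
  destruct (continuity_pos_nbhd_family F z m Hc) as [del [Hdel H]].
  { intros j Hj. destruct (Rlt_dec 0 (F j z)) as [|Hn]; [assumption|].
    exfalso. apply Hpos. exists j. split; [exact Hj | lra]. }
  assert (z <= z - del / 2); [|lra].
  apply Hlub. intros x [j [Hj Hx]]. specialize (Hub x (ex_intro _ j (conj Hj Hx))).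
  destruct (Rle_dec x (z - del / 2)) as [|Hgt]; [assumption|].
  assert (0 < F j x) by (apply H; [rewrite Rabs_left1; lra | exact Hj]). lra.
Qed.

Section LevelRecursion.
Variables (d k : nat) (alpha : R).

(* Solves level_image alpha f j = lam * f j for f 0 = 1, returning (f (n - 1), f n). *)
Fixpoint level_pair (lam : R) (n : nat) : R * R :=
  match n with
  | O => (0, 1)
  | S n => let p := level_pair lam n in
      (snd p, ((lam - alpha * level_degree d k n) * snd p - (1 - alpha) * fst p)
              / ((1 - alpha) * INR d))
  end.

Definition level_vector (lam : R) (n : nat) : R := snd (level_pair lam n).

Lemma level_pair_fst lam n : fst (level_pair lam n) = below (level_vector lam) n.
Proof. destruct n; reflexivity. Qed.

Lemma level_pair_continuous n :
  continuity (fun lam => fst (level_pair lam n)) /\ continuity (fun lam => snd (level_pair lam n)).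
Proof.
  assert (Hconst : forall c : R, continuity (fun _ => c))
    by (intros c; apply continuity_const; intros x y; reflexivity).
  induction n as [|n [IH1 IH2]]; simpl; [split; apply Hconst|]. split; [exact IH2|].
  apply (continuity_mult _ (fun _ => / ((1 - alpha) * INR d))); [|apply Hconst].
  apply continuity_minus; [apply continuity_mult; [|exact IH2] | apply continuity_scal, IH1].
  apply continuity_minus; [apply derivable_continuous, derivable_id | apply Hconst].
Qed.

Hypotheses (Hd : (1 <= d)%nat) (Ha : 0 <= alpha < 1).

Lemma level_vector_step lam j :
  alpha * level_degree d k j * level_vector lam j + (1 - alpha) * below (level_vector lam) j
  + (1 - alpha) * INR d * level_vector lam (S j) = lam * level_vector lam j.
Proof.
  assert (HD : 1 <= INR d) by (apply (le_INR 1); exact Hd).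
  rewrite <- level_pair_fst. unfold level_vector. simpl. field. split; [lra | nra].
Qed.

Lemma level_vector_eigen lam : level_vector lam k = 0 ->
  forall j, (j < k)%nat -> level_image d k alpha (level_vector lam) j = lam * level_vector lam j.
Proof.
  intros Hk j Hj. rewrite <- level_vector_step. unfold level_image, above.
  destruct (lt_dec (S j) k); [ring|]. replace (S j) with k by lia. rewrite Hk. ring.
Qed.

Lemma level_vector_pos_large lam : INR d + 1 <= lam -> forall n, 0 < level_vector lam n.
Proof.
  intros Hl n. assert (HD : 1 <= INR d) by (apply (le_INR 1); exact Hd).
  assert (Hc : 0 < (1 - alpha) * INR d) by nra.
  enough (0 <= fst (level_pair lam n) <= snd (level_pair lam n) /\ 0 < snd (level_pair lam n))
    by tauto.
  induction n as [|n [[H1 H2] H3]]; simpl; [lra|].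
  set (s := snd (level_pair lam n)) in *. set (f0 := fst (level_pair lam n)) in *.
  pose proof (level_degree_bounds d k n).
  assert (s <= ((lam - alpha * level_degree d k n) * s - (1 - alpha) * f0)
               / ((1 - alpha) * INR d)); [|lra].
  apply Rmult_le_reg_r with ((1 - alpha) * INR d); [exact Hc|].
  unfold Rdiv. rewrite Rmult_assoc, Rinv_l, Rmult_1_r by lra.
  assert (alpha * level_degree d k n <= alpha * (INR d + 1)) by nra. nra.
Qed.

(* f (j+2) = - f j / d whenever f (j+1) = 0, so a first zero before level k forces a
   sign change. *)
Lemma level_vector_no_early_zero lam :
  (forall j, (j <= k)%nat -> 0 <= level_vector lam j) ->
  forall j, (j < k)%nat -> level_vector lam j <> 0.
Proof.
  intros Hnn. assert (HD : 1 <= INR d) by (apply (le_INR 1); exact Hd).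
  induction j as [|j IH]; intros Hj Hz; [unfold level_vector in Hz; simpl in Hz; lra|].
  pose proof (level_vector_step lam (S j)) as Hstep. cbn [below] in Hstep.
  rewrite Hz, !Rmult_0_r, Rplus_0_l in Hstep.
  assert (0 <= (1 - alpha) * INR d * level_vector lam (S (S j)))
    by (apply Rmult_le_pos; [nra | apply Hnn; lia]).
  apply (IH ltac:(lia)), Rle_antisym; [|apply Hnn; lia].
  apply (Rmult_le_reg_l (1 - alpha)); lra.
Qed.

Lemma exists_positive_level_vector : (1 <= k)%nat ->
  exists lam, (forall j, (j < k)%nat -> 0 < level_vector lam j) /\ level_vector lam k = 0.
Proof.
  intros Hk.
  destruct (continuous_family_last_zero (fun lam j => level_vector j lam) (S k)
              (alpha * level_degree d k 0) (INR d + 1)) as [z [Hnn [j [Hj Hz]]]].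
  - intros j. apply level_pair_continuous.
  - exists 1%nat. split; [lia|]. unfold level_vector. simpl. unfold Rdiv. nra.
  - intros y Hy j _. apply level_vector_pos_large, Hy.
  - assert (Hnn' : forall j, (j <= k)%nat -> 0 <= level_vector z j) by (intros; apply Hnn; lia).
    pose proof (level_vector_no_early_zero z Hnn') as Hne.
    exists z. split.
    + intros i Hi. specialize (Hne i Hi). specialize (Hnn' i ltac:(lia)). lra.
    + destruct (Nat.eq_dec j k) as [<-|]; [exact Hz|]. exfalso. apply (Hne j); [lia | exact Hz].
Qed.

End LevelRecursion.

Lemma bethe_largest_eigenvalue d k alpha lam :
  (1 <= d)%nat -> (1 <= k)%nat -> 0 <= alpha < 1 ->
  (forall j, (j < k)%nat -> 0 < level_vector d k alpha lam j) ->
  level_vector d k alpha lam k = 0 ->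
  is_largest_eigenvalue (bethe_vertices d k) (bethe_A_alpha d k alpha) lam.
Proof.
  intros Hd Hk Ha Hpos Hzero.
  apply (largest_eigenvalue_of_pos_eigenvector _ _
           (fun u v _ _ => bethe_A_alpha_nonneg d k alpha u v ltac:(lra))
           (fun v => level_vector d k alpha lam (length v))).
  - pose proof (root_in_bethe_vertices d k Hk) as Hroot. intros E. rewrite E in Hroot. exact Hroot.
  - intros u Hu. apply in_bethe_vertices in Hu as [Hu _]. apply Hpos, Hu.
  - intros u Hu. rewrite bethe_A_alpha_level_sum by exact Hu.
    apply in_bethe_vertices in Hu as [Hu _]. apply level_vector_eigen; assumption.
Qed.

Lemma amgm_weighted P Q b x y : 0 < P -> P * Q = b * b -> 2 * b * x * y <= P * x * x + Q * y * y.
Proof.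
  intros HP HPQ. apply Rmult_le_reg_l with P; [exact HP|].
  assert (P * (P * x * x + Q * y * y) - P * (2 * b * x * y) = (P * x - b * y) * (P * x - b * y)).
  { replace (P * (P * x * x + Q * y * y)) with (P * P * x * x + (P * Q) * y * y) by ring.
    rewrite HPQ. ring. }
  pose proof (Rle_0_sqr (P * x - b * y)). unfold Rsqr in *. lra.
Qed.

Section TridiagonalRayleigh.
Variables (m : nat) (a f w : nat -> R) (p r beta lam : R).
Hypotheses (Hp : 0 < p) (Hr : 0 < r) (Hbeta : p * r = beta * beta).
Hypotheses (Hf : forall j, (j < S m)%nat -> 0 < f j) (Hfm : f (S m) = 0).
Hypothesis Heig :
  forall j, (j < S m)%nat -> a j * f j + p * below f j + r * f (S j) = lam * f j.

(* Divide the j-th equation by f j, weight it by (w j)^2 and sum. *)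
Lemma tridiagonal_weighted_identity :
  lam * sumL (seq 0 (S m)) (fun j => w j * w j)
  = sumL (seq 0 (S m)) (fun j => a j * (w j * w j))
    + sumL (seq 0 m) (fun j => p * (f j / f (S j)) * (w (S j) * w (S j))
                              + r * (f (S j) / f j) * (w j * w j)).
Proof.
  rewrite <- sumL_scal.
  rewrite (sumL_ext _ _ (fun j => a j * (w j * w j)
             + (p * (below f j / f j) * (w j * w j) + r * (f (S j) / f j) * (w j * w j)))).
  - rewrite !sumL_plus. apply (f_equal2 Rplus); [reflexivity|]. apply (f_equal2 Rplus).
    + rewrite sumL_seq_first. cbn [below]. unfold Rdiv at 1. rewrite Rmult_0_l. ring.
    + rewrite sumL_seq_last, Hfm. unfold Rdiv at 2. rewrite Rmult_0_l. ring.
  - intros j Hj. apply in_seq in Hj. specialize (Hf j ltac:(lia)).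
    replace (lam * (w j * w j)) with (lam * f j / f j * (w j * w j)) by (field; lra).
    rewrite <- (Heig j) by lia. field. lra.
Qed.

Lemma tridiagonal_rayleigh_lower :
  (exists j, (j < m)%nat /\ w j <> 0 /\ w (S j) = 0) ->
  sumL (seq 0 (S m)) (fun j => a j * (w j * w j))
  + 2 * beta * sumL (seq 0 m) (fun j => w j * w (S j))
  < lam * sumL (seq 0 (S m)) (fun j => w j * w j).
Proof.
  intros [j0 [Hj0 [Hw0 Hw1]]].
  rewrite tridiagonal_weighted_identity, <- sumL_scal. apply Rplus_lt_compat_l.
  assert (Hratio : forall j, (j < m)%nat -> 0 < f (S j) / f j /\ 0 < f j / f (S j))
    by (intros j Hj; split; apply Rdiv_lt_0_compat; apply Hf; lia).
  apply (sumL_lt _ _ _ j0); [apply in_seq; lia | |].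
  - rewrite Hw1. destruct (Hratio j0 Hj0) as [H1 _].
    assert (0 < r * (f (S j0) / f j0) * (w j0 * w j0)); [|lra].
    apply Rmult_lt_0_compat; [nra | exact (Rsqr_pos_lt _ Hw0)].
  - intros j Hj. apply in_seq in Hj. destruct (Hratio j ltac:(lia)) as [H1 H2].
    pose proof (Hf j ltac:(lia)). pose proof (Hf (S j) ltac:(lia)).
    assert (Hprod : r * (f (S j) / f j) * (p * (f j / f (S j))) = beta * beta)
      by (rewrite <- Hbeta; field; lra).
    assert (HP : 0 < r * (f (S j) / f j)) by nra.
    pose proof (amgm_weighted _ _ _ (w j) (w (S j)) HP Hprod). lra.
Qed.

End TridiagonalRayleigh.

Lemma sin_mul_sum_cos_even t n :
  2 * sin t * sumL (seq 0 n) (fun j => cos (2 * INR (S j) * t))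
  = sin ((2 * INR n + 1) * t) - sin t.
Proof.
  induction n as [|n IH].
  { cbn [seq INR]. rewrite sumL_nil. replace ((2 * 0 + 1) * t) with t by ring. ring. }
  rewrite sumL_seq_last, Rmult_plus_distr_l, IH, !S_INR.
  replace ((2 * (INR n + 1) + 1) * t) with (2 * (INR n + 1) * t + t) by ring.
  replace ((2 * INR n + 1) * t) with (2 * (INR n + 1) * t - t) by ring.
  rewrite sin_plus, sin_minus. ring.
Qed.

Lemma sin_mul_sum_cos_odd t n :
  2 * sin t * sumL (seq 0 n) (fun j => cos ((2 * INR (S j) + 1) * t))
  = sin ((2 * INR n + 2) * t) - sin (2 * t).
Proof.
  induction n as [|n IH].
  { cbn [seq INR]. rewrite sumL_nil. replace ((2 * 0 + 2) * t) with (2 * t) by ring. ring. }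
  rewrite sumL_seq_last, Rmult_plus_distr_l, IH, !S_INR.
  replace ((2 * (INR n + 1) + 2) * t) with ((2 * (INR n + 1) + 1) * t + t) by ring.
  replace ((2 * INR n + 2) * t) with ((2 * (INR n + 1) + 1) * t - t) by ring.
  rewrite sin_plus, sin_minus. ring.
Qed.

Lemma PI_sq_le_10 : PI * PI <= 10.
Proof.
  destruct (PI_2_3_7_ineq 1) as [_ H].
  unfold sum_f_R0, tg_alt, PI_2_3_7_tg, Ratan_seq in H. simpl in H.
  pose proof PI_RGT_0. nra.
Qed.

Definition sine_weight (k j : nat) : R := sin (INR (S j) * (PI / INR k)).

Section SineWeights.
Variable k : nat.
Hypothesis Hk : (2 <= k)%nat.

Lemma sin_PI_div_pos : 0 < sin (PI / INR k).
Proof. rewrite <- (Rmult_1_l (PI / INR k)). apply (sin_frac_PI_pos 1). lia. Qed.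

Lemma sum_sine_weight_sq :
  sumL (seq 0 k) (fun j => sine_weight k j * sine_weight k j) = INR k / 2.
Proof.
  set (th := PI / INR k). assert (HkR : 0 < INR k) by (apply lt_0_INR; lia).
  pose proof sin_PI_div_pos as Hs. fold th in Hs.
  assert (HC : sumL (seq 0 k) (fun j => cos (2 * INR (S j) * th)) = 0).
  { pose proof (sin_mul_sum_cos_even th k) as HT.
    replace ((2 * INR k + 1) * th) with (th + 2 * INR 1 * PI) in HT
      by (unfold th; simpl; field; lra).
    rewrite sin_period in HT. apply Rmult_eq_reg_l with (2 * sin th); lra. }
  rewrite (sumL_ext _ _ (fun j => / 2 + - / 2 * cos (2 * INR (S j) * th))).
  - rewrite sumL_plus, sumL_const, length_seq, sumL_scal, HC. field.
  - intros j _. unfold sine_weight. fold th.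
    replace (2 * INR (S j) * th) with (2 * (INR (S j) * th)) by ring.
    rewrite cos_2a_sin. field.
Qed.

Lemma sum_sine_weight_adjacent :
  sumL (seq 0 (pred k)) (fun j => sine_weight k j * sine_weight k (S j))
  = INR k * cos (PI / INR k) / 2.
Proof.
  set (th := PI / INR k). assert (HkR : 0 < INR k) by (apply lt_0_INR; lia).
  pose proof sin_PI_div_pos as Hs. fold th in Hs.
  assert (Hk1 : INR (pred k) = INR k - 1)
    by (destruct k as [|k']; [lia | rewrite S_INR; simpl; ring]).
  assert (HC : sumL (seq 0 (pred k)) (fun j => cos ((2 * INR (S j) + 1) * th)) = - cos th).
  { pose proof (sin_mul_sum_cos_odd th (pred k)) as HT. rewrite Hk1 in HT.
    replace ((2 * (INR k - 1) + 2) * th) with (2 * PI) in HT by (unfold th; field; lra).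
    rewrite sin_2PI, sin_2a in HT. apply Rmult_eq_reg_l with (2 * sin th); lra. }
  rewrite (sumL_ext _ _ (fun j => / 2 * cos th + - / 2 * cos ((2 * INR (S j) + 1) * th))).
  - rewrite sumL_plus, sumL_const, length_seq, sumL_scal, HC, Hk1. field.
  - intros j _. unfold sine_weight. fold th.
    replace ((2 * INR (S j) + 1) * th) with (INR (S j) * th + INR (S (S j)) * th)
      by (rewrite (S_INR (S j)); ring).
    replace (cos th) with (cos (INR (S (S j)) * th - INR (S j) * th))
      by (f_equal; rewrite (S_INR (S j)); ring).
    rewrite cos_minus, cos_plus. field.
Qed.

Lemma sine_weight_first_sq_le : sine_weight k 0 * sine_weight k 0 <= 10 / (INR k * INR k).
Proof.
  assert (HkR : 0 < INR k) by (apply lt_0_INR; lia).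
  unfold sine_weight. replace (INR 1 * (PI / INR k)) with (PI / INR k) by (simpl; ring).
  pose proof sin_PI_div_pos as Hs.
  assert (Hth : 0 < PI / INR k) by (apply Rdiv_lt_0_compat; [apply PI_RGT_0 | exact HkR]).
  pose proof (sin_lt_x _ Hth). pose proof PI_sq_le_10.
  apply Rle_trans with (PI / INR k * (PI / INR k)); [nra|].
  replace (PI / INR k * (PI / INR k)) with (PI * PI / (INR k * INR k)) by (field; lra).
  apply Rmult_le_compat_r; [|exact H0]. left. apply Rinv_0_lt_compat. nra.
Qed.

End SineWeights.

Lemma level_degree_weighted_sum d k alpha : (2 <= k)%nat -> 0 <= alpha ->
  alpha * (INR d + 1) * sumL (seq 0 k) (fun j => sine_weight k j * sine_weight k j)
  - alpha * (sine_weight k 0 * sine_weight k 0)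
  <= sumL (seq 0 k) (fun j => alpha * level_degree d k j * (sine_weight k j * sine_weight k j)).
Proof.
  intros Hk Ha.
  rewrite <- (sumL_indicator Nat.eq_dec (seq 0 k) 0%nat
                (alpha * (sine_weight k 0 * sine_weight k 0)))
    by (apply seq_NoDup || (apply in_seq; lia)).
  rewrite <- sumL_scal.
  enough (sumL (seq 0 k) (fun j => alpha * (INR d + 1) * (sine_weight k j * sine_weight k j))
          <= sumL (seq 0 k) (fun j =>
               alpha * level_degree d k j * (sine_weight k j * sine_weight k j)
               + if Nat.eq_dec j 0 then alpha * (sine_weight k 0 * sine_weight k 0) else 0))
    by (rewrite sumL_plus in *; lra).
  apply sumL_le. intros j Hj. apply in_seq in Hj.
  pose proof (Rle_0_sqr (sine_weight k j)). unfold Rsqr in *.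
  unfold level_degree, above, below.
  destruct j as [|j], (lt_dec _ k); simpl Nat.eq_dec; try lia; try nra.
  unfold sine_weight. replace (S (S j)) with k by lia. rewrite sin_PI_frac_mul by lia. lra.
Qed.

Lemma bethe_eigenvalue_lower d k alpha lam :
  (1 <= d)%nat -> (2 <= k)%nat -> 0 <= alpha < 1 ->
  (forall j, (j < k)%nat -> 0 < level_vector d k alpha lam j) ->
  level_vector d k alpha lam k = 0 ->
  alpha * (INR d + 1) + 2 * (1 - alpha) * sqrt (INR d) * cos (PI / INR k)
  - 20 * alpha * sqrt (INR d) / (INR k ^ 3) < lam.
Proof.
  intros Hd Hk Ha Hpos Hzero.
  assert (HD : 1 <= INR d) by (apply (le_INR 1); exact Hd).
  set (q := sqrt (INR d)).
  assert (Hqq : q * q = INR d) by (apply sqrt_sqrt; lra).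
  assert (Hq1 : 1 <= q) by (unfold q; rewrite <- sqrt_1; apply sqrt_le_1_alt; lra).
  assert (Hray :
    sumL (seq 0 k) (fun j => alpha * level_degree d k j * (sine_weight k j * sine_weight k j))
    + 2 * ((1 - alpha) * q) * sumL (seq 0 (pred k)) (fun j => sine_weight k j * sine_weight k (S j))
    < lam * sumL (seq 0 k) (fun j => sine_weight k j * sine_weight k j)).
  { destruct k as [|m]; [lia|].
    apply (tridiagonal_rayleigh_lower m _ (level_vector d (S m) alpha lam) _
             (1 - alpha) ((1 - alpha) * INR d)); try nra; try assumption.
    - intros j _. apply level_vector_step; assumption.
    - exists (pred m). split; [lia|]. unfold sine_weight. replace (S (pred m)) with m by lia.
      rewrite sin_PI_frac_mul by lia. split; [|reflexivity].
      apply Rgt_not_eq, sin_frac_PI_pos. lia. }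
  pose proof (level_degree_weighted_sum d k alpha Hk ltac:(lra)) as Hdeg.
  pose proof (sine_weight_first_sq_le k Hk) as Hw0.
  rewrite sum_sine_weight_sq, sum_sine_weight_adjacent in Hray by exact Hk.
  rewrite sum_sine_weight_sq in Hdeg by exact Hk.
  set (K := INR k) in *. assert (HK : 2 <= K) by (apply (le_INR 2); exact Hk).
  assert (Hroot : alpha * (sine_weight k 0 * sine_weight k 0) <= alpha * q * (10 / (K * K))).
  { rewrite Rmult_assoc. apply Rmult_le_compat_l; [lra|].
    apply Rle_trans with (10 / (K * K)); [exact Hw0|].
    rewrite <- (Rmult_1_l (10 / (K * K))) at 1. apply Rmult_le_compat_r; [|exact Hq1].
    apply Rlt_le, Rdiv_lt_0_compat; nra. }
  apply Rmult_lt_reg_r with (K / 2); [lra|].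
  replace ((alpha * (INR d + 1) + 2 * (1 - alpha) * q * cos (PI / K)
            - 20 * alpha * q / K ^ 3) * (K / 2))
    with (alpha * (INR d + 1) * (K / 2) + 2 * ((1 - alpha) * q) * (K * cos (PI / K) / 2)
          - alpha * q * (10 / (K * K))) by (field; lra).
  lra.
Qed.

(* At alpha = 1 the recursion divides by zero; A_1 is the diagonal degree matrix. *)
Definition max_degree_level (k : nat) : nat := if lt_dec 2 k then 1 else 0.

Section DegreeMatrix.
Variables d k : nat.
Hypotheses (Hd : (1 <= d)%nat) (Hk : (2 <= k)%nat).

Let r := level_degree d k (max_degree_level k).

Lemma level_degree_le_max j : (j < k)%nat -> level_degree d k j <= r.
Proof.
  intros Hj. assert (HD : 1 <= INR d) by (apply (le_INR 1); exact Hd).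
  unfold r, max_degree_level, level_degree, above, below.
  destruct j; repeat match goal with |- context [lt_dec ?a ?b] => destruct (lt_dec a b) end;
    try lia; lra.
Qed.

Lemma max_level_degree_bounds :
  INR d + 1 - 20 * sqrt (INR d) / INR k ^ 3 < r <= INR d + 1.
Proof.
  assert (HD : 1 <= INR d) by (apply (le_INR 1); exact Hd).
  assert (Hsq : 1 <= sqrt (INR d)) by (rewrite <- sqrt_1; apply sqrt_le_1_alt; lra).
  split; [|apply level_degree_bounds].
  unfold r, max_degree_level, level_degree, above, below.
  repeat match goal with |- context [lt_dec ?a ?b] => destruct (lt_dec a b) end; try lia.
  - assert (0 < 20 * sqrt (INR d) / INR k ^ 3); [|lra].
    apply Rdiv_lt_0_compat; [lra | apply pow_lt, lt_0_INR; lia].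
  - replace k with 2%nat by lia. simpl. lra.
Qed.

Lemma bethe_degree_largest_eigenvalue :
  is_largest_eigenvalue (bethe_vertices d k) (bethe_A_alpha d k 1) r.
Proof.
  set (u0 := repeat 0%nat (max_degree_level k)).
  assert (Hu0 : In u0 (bethe_vertices d k)).
  { apply in_bethe_vertices. unfold u0. rewrite repeat_length.
    split; [unfold max_degree_level; destruct (lt_dec 2 k); lia|].
    apply Forall_forall. intros x Hx. apply repeat_spec in Hx. lia. }
  split.
  - exists (fun v => if word_eq_dec v u0 then 1 else 0). split.
    + exists u0. split; [exact Hu0|]. destruct (word_eq_dec u0 u0); [lra | congruence].
    + intros u Hu.
      rewrite (sumL_ext _ _ (fun v => (if word_eq_dec v u0 then 1 else 0)
                                      * bethe_A_alpha d k 1 u v)) by (intros; ring).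
      rewrite (sumL_indicator_mul word_eq_dec _ u0 (bethe_A_alpha d k 1 u))
        by (apply NoDup_bethe_vertices || exact Hu0).
      unfold bethe_A_alpha, A_alpha, degMatrix.
      destruct (word_eq_dec u u0) as [->|]; [|ring].
      rewrite bethe_degree by exact Hu0. unfold r, u0. rewrite repeat_length. ring.
  - intros l Hl.
    apply (eigenvalue_le_of_subinvariant (bethe_vertices d k) (bethe_A_alpha d k 1)
             (fun u v _ _ => bethe_A_alpha_nonneg d k 1 u v ltac:(lra)) (fun _ => 1) r l);
      [intros; lra | |exact Hl].
    intros u Hu.
    pose proof (bethe_A_alpha_level_sum d k 1 u (fun _ => 1) Hu) as Hsum. cbv beta in Hsum.
    rewrite Hsum. unfold level_image. apply in_bethe_vertices in Hu as [Hu _].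
    pose proof (level_degree_le_max _ Hu). lra.
Qed.

End DegreeMatrix.

Theorem mainTheorem13 (d k : nat) (alpha : R) :
  (1 <= d)%nat -> (2 <= k)%nat -> 0 <= alpha <= 1 ->
  exists r : R,
    is_largest_eigenvalue (bethe_vertices d k) (bethe_A_alpha d k alpha) r /\
    r <= alpha * (INR d + 1)
         + 2 * (1 - alpha) * sqrt (INR d) * cos (PI / INR (k + 1)) /\
    alpha * (INR d + 1)
         + 2 * (1 - alpha) * sqrt (INR d) * cos (PI / INR k)
         - 20 * alpha * sqrt (INR d) / (INR k ^ 3) < r.
Proof.
  intros Hd Hk Ha.
  destruct (Req_dec alpha 1) as [->|Ha1].
  - exists (level_degree d k (max_degree_level k)).
    pose proof (max_level_degree_bounds d k Hd Hk).
    split; [apply bethe_degree_largest_eigenvalue; assumption | lra].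
  - assert (Ha' : 0 <= alpha < 1) by lra.
    destruct (exists_positive_level_vector d k alpha Hd Ha' ltac:(lia)) as [lam [Hpos Hzero]].
    pose proof (bethe_largest_eigenvalue d k alpha lam Hd ltac:(lia) Ha' Hpos Hzero) as Hlargest.
    exists lam. split; [exact Hlargest|]. split.
    + apply (bethe_eigenvalue_upper d k alpha lam Hd Ha), Hlargest.
    + apply bethe_eigenvalue_lower; assumption.
Qed.
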